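(* Assume $\mathfrak{b}<\mathfrak{q}$. Then there exists a compact Hausdorff sequentially separable space which is not selectively sequentially separable.
   Context: $\mathfrak{b}$ is the least cardinality of a subset of $\mathbb{N}^{\mathbb{N}}$ unbounded with respect to $\leq^*$, where $f\leq^* g$ means $f(n)\leq g(n)$ for all but finitely many $n$. A $Q$-set is a subset of $\mathbb{R}$ every subset of which is a $G_\delta$ in it; $\mathfrak{q}$ is the least cardinal $\lambda$ such that there is no $Q$-set of size $\lambda$ (equivalently, the smallest cardinal such that for every $\kappa<\mathfrak{q}$ there is a $Q$-set of size $\kappa$). A space is sequentially separable if it has a countable sequentially dense subset (every point is a limit of a sequence from it). A space $Z$ is selectively sequentially separable if for every sequence $(D_n:n\in\mathbb{N})$ of sequentially dense subsets of $Z$ one can choose finite $F_n\subseteq D_n$ so that $\bigcup_n F_n$ is sequentially dense in $Z$. *)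

From HB Require Import structures.
From mathcomp Require Import all_boot all_order all_algebra.
From mathcomp Require Import all_classical all_reals all_analysis.
Set Implicit Arguments. Unset Strict Implicit. Unset Printing Implicit Defensive.
Import Order.TTheory GRing.Theory Num.Theory.
Import numFieldNormedType.Exports.
Local Open Scope classical_set_scope.
Local Open Scope card_scope.

Definition le_star (f g : nat -> nat) : Prop :=
  exists N : nat, forall n, (N <= n)%N -> (f n <= g n)%N.

Definition unbounded_family (F : set (nat -> nat)) : Prop :=
  ~ exists g : nat -> nat, forall f, F f -> le_star f g.

Definition Qset (R : realType) (X : set R) : Prop :=
  forall Y : set R, Y `<=` X ->
    exists U : nat -> set R, (forall n, @open R (U n)) /\
      Y = X `&` \bigcap_n U n.

(* With b the least cardinality of an unbounded family and q the least
   cardinal lambda with no Q-set of size lambda, b < q means: every cardinal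
   lambda <= b is the size of some Q-set.  Cardinals lambda <= b are the sizes
   of subsets of an unbounded family F of minimal size. *)
Definition b_lt_q (R : realType) : Prop :=
  exists F : set (nat -> nat),
    [/\ unbounded_family F,
        (forall G, unbounded_family G -> (F #<= G)) &
        (forall S, S `<=` F -> exists X : set R, Qset X /\ (S #= X))].

Definition seq_dense (Z : topologicalType) (D : set Z) : Prop :=
  forall z : Z, exists u : nat -> Z, (forall n, D (u n)) /\ (u @ \oo --> z).

Definition seq_separable (Z : topologicalType) : Prop :=
  exists D : set Z, countable D /\ seq_dense D.

Definition sel_seq_separable (Z : topologicalType) : Prop :=
  forall Ds : nat -> set Z, (forall n, seq_dense (Ds n)) ->
    exists Fs : nat -> set Z,
      (forall n, finite_set (Fs n) /\ Fs n `<=` Ds n) /\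
      seq_dense (\bigcup_n Fs n).

From HB Require Import structures.
From mathcomp Require Import all_boot all_order all_algebra.
From mathcomp Require Import all_classical all_reals all_analysis.

(* Take an unbounded family F of size b and inject it into a Q-set X ⊆ R; the
   space is the Cantor cube 2^F.  Every subset Y of X is relatively G_delta
   and so is X \ Y, so the indicator of Y is a pointwise limit of indicators
   of sets described by finitely many rational intervals: a countable
   sequentially dense family D.  Fix a coordinate n0 at which F is unbounded
   and let D_n consist of the members of D switched off at every f with
   f(j) >= m for some j <= n + n0; each D_n is still sequentially dense.  A
   finite selection from D_n bounds m by some g(n).  If a sequence from the
   selection converged to the constant 1, then either its levels n stay
   bounded, and an f with f(n0) large is switched off in all its terms, or
   they do not, and an f in F not dominated by g along those levels is
   switched off in terms arbitrarily far out. *)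

Set Implicit Arguments.
Unset Strict Implicit.
Unset Printing Implicit Defensive.

Import Order.TTheory Num.Theory.
Import numFieldNormedType.Exports.
Local Open Scope classical_set_scope.
Local Open Scope card_scope.

Lemma ptws_discrete_cvgP (I : Type) (T : discreteTopologicalType)
    (F : set_system (I -> T)) (z : I -> T) : Filter F ->
  F --> (z : {ptws I -> T}) <-> forall i, \forall f \near F, f i = z i.
Proof.
move=> FF; rewrite cvg_sup; split => [Fz i | Fz i U [V [[W oW <-] WFz VU]]].
  apply: (Fz i [set f | f i = z i]); exists (@^~ i @^-1` [set z i]) => //.
  by split=> //; exists [set z i]; first exact: discrete_open.
by apply: filterS VU _; apply: filterS (Fz i) => f /= ->.
Qed.

Lemma ptws_compact (I : eqType) (T : topologicalType) :
  compact [set: T] -> compact [set: {ptws I -> T}].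
Proof.
move=> cT; have := @tychonoff I (fun=> T) (fun=> setT) (fun=> cT).
by congr compact; apply/seteqP; split.
Qed.

Section RationalIntervals.
Variable R : realType.
Local Open Scope ring_scope.

Definition rat_itv (j : nat) : set R :=
  if unpickle j is Some (a, b) then [set x | ratr a < x < ratr b] else set0.

Lemma rat_itv_basis (U : set R) (x : R) :
  open U -> U x -> exists j, rat_itv j x /\ rat_itv j `<=` U.
Proof.
rewrite openE => oU /oU; rewrite /interior => /nbhs_ballP [e /= e0 ballU].
have [a] : exists a : rat, ratr a \in `]x - e, x[.
  by apply: rat_in_itvoo; rewrite ltrBlDr ltrDl.
rewrite in_itv /= => /andP [ea ax].
have [b] : exists b : rat, ratr b \in `]x, x + e[.
  by apply: rat_in_itvoo; rewrite ltrDl.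
rewrite in_itv /= => /andP [xb be].
exists (pickle (a, b)); rewrite /rat_itv pickleK /=; split; first by rewrite ax.
move=> y /andP [ay yb]; apply: ballU; rewrite ball_itv /= in_itv /=.
by rewrite (lt_trans ea ay) (lt_trans yb be).
Qed.

Definition rat_itv_union (s : seq nat) : set R :=
  \bigcup_(j in [set` s]) rat_itv j.

Definition inner_approx (U : set R) (k : nat) : seq nat :=
  [seq j <- iota 0 k | `[< rat_itv j `<=` U >]].

Lemma inner_approx_sub (U : set R) (k : nat) :
  rat_itv_union (inner_approx U k) `<=` U.
Proof. by move=> x [j /=]; rewrite mem_filter => /andP [/asboolP jU _] /jU. Qed.

Lemma inner_approx_eventually (U : set R) (x : R) : open U -> U x ->
  \forall k \near \oo, rat_itv_union (inner_approx U k) x.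
Proof.
move=> oU Ux; have [j [jx jU]] := rat_itv_basis oU Ux.
apply: filterS (nbhs_infty_gt j) => k jk; exists j => //=.
rewrite mem_filter mem_iota /= jk andbT; exact/asboolP.
Qed.

End RationalIntervals.

(* The code (k, a, b) stands for the union over n <= k of the sets
   ~ A_n `&` B_0 `&` ... `&` B_(n-1), where A_n and B_m are the finite unions of
   rational intervals listed in a and b.  With A_n, B_m approximating from
   inside the G_delta presentations of X `\` Y and Y, these sets converge
   pointwise on X to Y. *)
Definition code := (nat * seq (seq nat) * seq (seq nat))%type.

Section Codes.
Variable R : realType.

Definition code_set (c : code) : set R :=
  let: (k, a, b) := c in
  [set x | exists n, [/\ n <= k, ~ rat_itv_union (nth [::] a n) x &
                        forall m, m < n -> rat_itv_union (nth [::] b m) x]].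

Definition approx_code (U V : nat -> set R) (k : nat) : code :=
  (k, mkseq (fun n => inner_approx (U n) k) k.+1,
      mkseq (fun m => inner_approx (V m) k) k.+1).

Lemma approx_code_in (U V : nat -> set R) (n : nat) (x : R) :
  (forall m, open (V m)) -> (forall m, V m x) -> ~ U n x ->
  \forall k \near \oo, code_set (approx_code U V k) x.
Proof.
move=> oV Vx nUx.
have : \forall k \near \oo,
    forall m : 'I_n, rat_itv_union (inner_approx (V m) k) x.
  by apply: filter_forall => m; exact: inner_approx_eventually.
apply: filterS2 (nbhs_infty_ge n) => k nk Vkx; exists n.
rewrite !nth_mkseq ?ltnS //; split=> // [/inner_approx_sub //|m mn].
have mk : m < k.+1 by rewrite ltnS (leq_trans (ltnW mn)).
by rewrite nth_mkseq //; exact: Vkx (Ordinal mn).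
Qed.

Lemma approx_code_out (U V : nat -> set R) (m : nat) (x : R) :
  (forall n, open (U n)) -> (forall n, U n x) -> ~ V m x ->
  \forall k \near \oo, ~ code_set (approx_code U V k) x.
Proof.
move=> oU Ux nVx.
have : \forall k \near \oo,
    forall n : 'I_m.+1, rat_itv_union (inner_approx (U n) k) x.
  by apply: filter_forall => n; exact: inner_approx_eventually.
apply: filterS => k Ukx [n [nk]]; rewrite !nth_mkseq ?ltnS // => nUkx Vkx.
have [nm | mn] := leqP n m; first by apply: nUkx; exact: (Ukx (Ordinal _)).
have mk : m < k.+1 by rewrite ltnS (leq_trans (ltnW mn)).
by move: (Vkx m mn); rewrite nth_mkseq // => /inner_approx_sub /nVx.
Qed.

End Codes.

Section QsetSeparable.
Variable R : realType.

Lemma Qset_approx (X Y : set R) : Qset X -> Y `<=` X ->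
  exists c : nat -> code,
    forall x, X x -> \forall k \near \oo, code_set (c k) x <-> Y x.
Proof.
move=> QX YX; have [V [oV eV]] := QX Y YX.
have [U [oU eU]] := QX (X `\` Y) (@subDsetl _ X Y).
exists (approx_code U V) => x Xx; have [Yx | nYx] := pselect (Y x).
  have [n nUx] : exists n, ~ U n x.
    apply/existsNP => Ux; have : (X `&` \bigcap_n U n) x by split=> // n _.
    by rewrite -eU => -[].
  have Vx m : V m x by move: Yx; rewrite eV => -[_]; exact.
  by apply: filterS (approx_code_in oV Vx nUx) => k.
have [m nVx] : exists m, ~ V m x.
  by apply/existsNP => Vx; apply: nYx; rewrite eV; split=> // m _.
have Ux n : U n x by have : (X `\` Y) x by []; rewrite eU => -[_]; exact.
by apply: filterS (approx_code_out oU Ux nVx) => k.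
Qed.

Definition code_indicator (I : Type) (e : I -> R) (c : code) : I -> bool :=
  fun i => `[< code_set c (e i) >].

Lemma Qset_code_indicator_dense (I : Type) (e : I -> R) (X : set R) :
  Qset X -> injective e -> range e `<=` X ->
  seq_dense (range (code_indicator e) : set {ptws I -> bool}).
Proof.
move=> QX einj eX z; pose Y := e @` [set i | z i].
have YX : Y `<=` X by move=> _ [i _ <-]; exact/eX/imageT.
have [c cY] := Qset_approx QX YX.
exists (fun k => code_indicator e (c k)); split=> [k|]; first by exists (c k).
apply/ptws_discrete_cvgP => i.
apply: filterS (cY _ (eX _ (imageT e i))) => k ckY.
have Yz : Y (e i) <-> z i by split=> [[j zj /einj <-] | zi]; last exists i.
by apply/idP/idP => [/asboolP/ckY/Yz | /Yz/ckY/asboolP].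
Qed.

End QsetSeparable.

Lemma not_le_star_often (f g : nat -> nat) :
  ~ le_star f g -> forall N, exists2 n, N <= n & g n < f n.
Proof.
move=> nfg N; apply/not_exists2P => fg; apply: nfg; exists N => n Nn.
by case: (fg n) => [/(_ Nn) // | /negP]; rewrite -leqNgt.
Qed.

Lemma finite_nat_bounded (A : set nat) : finite_set A ->
  exists M, forall m, A m -> m <= M.
Proof.
move=> /finite_seqP [s ->]; exists (\max_(m <- s) m) => m ms.
exact: leq_bigmax_seq ms _.
Qed.

Lemma finite_set_bounded_witness (T : Type) (A : set T) (P : T -> nat -> Prop) :
  finite_set A -> (forall a, A a -> exists m, P a m) ->
  exists M, forall a, A a -> exists2 m, m <= M & P a m.
Proof.
move=> finA AP; have /choice [g Pg] : forall a, exists m, A a -> P a m.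
  by move=> a; have [/AP [m Pm] | nAa] := pselect (A a); [exists m | exists 0].
have [M gM] := finite_nat_bounded (finite_image g finA).
by exists M => a Aa; exists (g a); [apply: gM; exists a | exact: Pg].
Qed.

Lemma range_set_val (T : Type) (A : set T) : range (val : A -> T) = A.
Proof.
apply/seteqP; split=> [_ [a _ <-] | t At]; first exact/set_mem/valP.
by exists (exist _ t (mem_set At)).
Qed.

Section Truncation.
Variables (I : Type) (phi : I -> nat -> nat).
Hypothesis phi_unbounded : unbounded_family (range phi).

Lemma unbounded_not_le_star (g : nat -> nat) : exists i, ~ le_star (phi i) g.
Proof.
apply/existsNP => le_phi; apply: phi_unbounded; exists g => _ [i _ <-].
exact: le_phi.
Qed.

Lemma unbounded_coordinate : exists n0, forall m, exists i, m <= phi i n0.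
Proof.
apply: contrapT => /forallNP bounded.
have {}bounded n : exists m, forall i, phi i n < m.
  have /existsNP [m /forallNP nm] := bounded n; exists m => i.
  by rewrite ltnNge; apply/negP; exact: nm.
have [g phi_g] := choice bounded; have [i] := unbounded_not_le_star g.
by apply; exists 0 => n _; exact/ltnW/phi_g.
Qed.

Definition truncate (N m : nat) (d : I -> bool) : I -> bool :=
  fun i => d i && (\max_(j < N.+1) phi i j < m).

Lemma truncate_eventually (N : nat) (i : I) :
  \forall m \near \oo, forall d, truncate N m d i = d i.
Proof.
apply: filterS (nbhs_infty_gt (\max_(j < N.+1) phi i j)) => m mi d.
by rewrite /truncate mi andbT.
Qed.

Lemma truncate_false (N m j : nat) (d : I -> bool) (i : I) :
  j <= N -> m <= phi i j -> truncate N m d i = false.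
Proof.
rewrite -ltnS => jN mi; rewrite /truncate ltnNge.
have := @leq_bigmax _ (fun j : 'I_N.+1 => phi i j) (Ordinal jN).
by move=> /(leq_trans mi) ->; rewrite andbF.
Qed.

Definition truncations (N : nat) (D : set (I -> bool)) : set (I -> bool) :=
  [set h | exists m d, D d /\ h = truncate N m d].

Lemma seq_dense_truncations (N : nat) (D : set {ptws I -> bool}) :
  seq_dense D -> seq_dense (truncations N D : set {ptws I -> bool}).
Proof.
move=> dD z; have [u [Du uz]] := dD z.
exists (fun k => truncate N k (u k)); split=> [k|]; first by exists k, (u k).
apply/ptws_discrete_cvgP => i; have /ptws_discrete_cvgP/(_ i) := uz.
by rewrite !near_map; apply: filterS2 (truncate_eventually N i) => k ->.
Qed.

Section TruncatedSequences.
Variables (n0 : nat) (u : nat -> I -> bool) (lvl bnd : nat -> nat).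
Hypothesis n0_unbounded : forall m, exists i, m <= phi i n0.
Hypothesis u_truncated : forall k i j,
  j <= lvl k + n0 -> bnd (lvl k) <= phi i j -> u k i = false.

Lemma bounded_level_not_eventually (N : nat) : (forall k, lvl k <= N) ->
  exists i, ~ \forall k \near \oo, u k i.
Proof.
move=> lvlN; have [i bnd_i] := n0_unbounded (\max_(l < N.+1) bnd l).
exists i => -[K _ uK]; have := uK K (leqnn K).
rewrite (u_truncated (j := n0)) ?leq_addl //; apply: leq_trans bnd_i.
have lvlK : lvl K < N.+1 by rewrite ltnS.
exact: (@leq_bigmax _ (fun l : 'I_N.+1 => bnd l) (Ordinal lvlK)).
Qed.

Lemma unbounded_level_not_eventually : (forall N, exists k, N <= lvl k) ->
  exists i, ~ \forall k \near \oo, u k i.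
Proof.
move=> /choice [kap lvl_kap].
have [i nle] := unbounded_not_le_star (fun n => bnd (lvl (kap n))).
exists i => -[K _ uK].
have [n Ln bnd_n] := not_le_star_often nle (\max_(k < K) lvl k).+1.
have Kk : K <= kap n.
  rewrite leqNgt; apply/negP => kK.
  have := @leq_bigmax _ (fun k : 'I_K => lvl k) (Ordinal kK).
  by rewrite leqNgt (leq_trans Ln (lvl_kap n)).
have := uK _ Kk; rewrite (u_truncated (j := n)) ?(ltnW bnd_n) //.
exact: leq_trans (lvl_kap n) (leq_addr _ _).
Qed.

Lemma truncated_not_eventually : exists i, ~ \forall k \near \oo, u k i.
Proof.
have [[N lvlN] | unb] := pselect (exists N, forall k, lvl k <= N).
  exact: bounded_level_not_eventually lvlN.
apply: unbounded_level_not_eventually => N; apply/not_existsP => N_lvl.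
by apply: unb; exists N => k; rewrite leqNgt; apply/negP => /ltnW /N_lvl.
Qed.

End TruncatedSequences.

Lemma unbounded_not_sel_seq_separable (D : set {ptws I -> bool}) :
  seq_dense D -> ~ sel_seq_separable {ptws I -> bool}.
Proof.
move=> dD sel; have [n0 n0_unbounded] := unbounded_coordinate.
have [Fs [finFs dFs]] := sel _ (fun n => seq_dense_truncations (n + n0) dD).
have /choice [bnd Fs_bnd] : forall n, exists M, forall h, Fs n h ->
    exists2 m, m <= M & exists d, h = truncate (n + n0) m d.
  move=> n; apply: finite_set_bounded_witness (finFs n).1 _.
  by move=> h /(finFs n).2 [m [d [_ ->]]]; exists m, d.
have [u [Fs_u ut]] := dFs (fun _ => true).
have /choice [lvl Fs_lvl] : forall k, exists n, Fs n (u k).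
  by move=> k; have [n _ Fn] := Fs_u k; exists n.
have u_truncated k i j :
    j <= lvl k + n0 -> bnd (lvl k) <= phi i j -> u k i = false.
  move=> jk bnd_ij; have [m mb [d ->]] := Fs_bnd _ _ (Fs_lvl k).
  exact: truncate_false jk (leq_trans mb bnd_ij).
have [i] := truncated_not_eventually n0_unbounded u_truncated; apply.
by have /ptws_discrete_cvgP/(_ i) := ut; rewrite near_map.
Qed.

End Truncation.

Theorem theorem5p1 (R : realType) :
  b_lt_q R ->
  exists Z : topologicalType,
    [/\ compact [set: Z], hausdorff_space Z, seq_separable Z
      & ~ sel_seq_separable Z].
Proof.
move=> [F [F_unbounded _ F_Qsets]].
have [X [QX FX]] := F_Qsets F (@subset_refl _ F).
have /pcard_leP/injfunPex [e eFX e_inj] : F #<= X.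
  by move: FX; rewrite card_eq_le => /andP [].
pose E (f : F) := e (val f).
have E_inj : injective E.
  by move=> f g /e_inj efg; apply/val_inj/efg; exact: valP.
have EX : range E `<=` X by move=> _ [f _ <-]; exact/eFX/set_mem/valP.
have E_dense := Qset_code_indicator_dense QX E_inj EX.
exists {ptws F -> bool}; split.
- exact/ptws_compact/bool_compact.
- by apply: hausdorff_product => _; exact: discrete_hausdorff.
- exists (range (code_indicator E)); split=> //.
  exact: sub_countable (card_image_le _ _) (countableP _).
- apply: (@unbounded_not_sel_seq_separable _ val _ _ E_dense).
  by rewrite range_set_val.
Qed.
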